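(* Let $p,q$ be positive integers and $\hat e\ge 2$ an integer. The length of every cycle of the Cat map over $\mathbb{Z}_{2^{\hat e}}$ belongs to the set $\{1\}\cup\{2^k\cdot T_1: k=0,1,\dots,\hat e-1\}$, where $T_1=3$ if $p$ and $q$ are both odd, $T_1=2$ if exactly one of $p,q$ is odd, and $T_1=1$ if $p$ and $q$ are both even.
   Context: $\mathbf{C}=\begin{bmatrix}1 & p\\ q & 1+pq\end{bmatrix}$; the Cat map over $\mathbb{Z}_{2^{\hat e}}$ is the bijection $v\mapsto\mathbf{C}v\bmod 2^{\hat e}$ of $\mathbb{Z}_{2^{\hat e}}^2$; a cycle of length $n$ is the orbit of a point $v$ for which $n$ is the least positive integer with $\mathbf{C}^nv\equiv v\pmod{2^{\hat e}}$. *)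

From mathcomp Require Import all_boot.
Set Implicit Arguments. Unset Strict Implicit. Unset Printing Implicit Defensive.

(* Points of Z_{2^e}^2 are pairs (x, y) of naturals with x, y < 2^e.
   The Cat matrix C = [[1, p], [q, 1 + p q]] acts by v |-> C v mod 2^e. *)
Definition cat_map (e p q : nat) (v : nat * nat) : nat * nat :=
  ((1 * v.1 + p * v.2) %% 2 ^ e, (q * v.1 + (1 + p * q) * v.2) %% 2 ^ e).

Definition in_Z2e (e : nat) (v : nat * nat) : Prop := v.1 < 2 ^ e /\ v.2 < 2 ^ e.

Definition cycle_length (e p q : nat) (v : nat * nat) (n : nat) : Prop :=
  0 < n /\ iter n (cat_map e p q) v = v /\
  (forall m, 0 < m -> m < n -> iter m (cat_map e p q) v <> v).

Definition T1 (p q : nat) : nat :=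
  if odd p && odd q then 3 else if odd p || odd q then 2 else 1.

From mathcomp Require Import all_boot.
From mathcomp Require Import zify ring.

Set Implicit Arguments.
Unset Strict Implicit.
Unset Printing Implicit Defensive.

(* The [n]-th iterate of the Cat map is [v |-> C^n v mod 2^e] for the integer
   matrix power [C^n].  One checks [C^(T1) = I (mod 2)], and squaring a matrix
   [I + m A] with [m] even gives [I (mod 2 m)]; hence [C^(T1 2^(e-1)) = I (mod 2^e)]
   and every cycle length divides [T1 2^(e-1)].  It remains to see that a cycle
   length [n <> 1] is a multiple of [T1].  For [T1 = 1, 2] this holds because [n]
   is a power of 2.  For [p], [q] odd and [3] not dividing [n], [C^n] is congruent
   mod 2 to [C] or [C^2], which fix no nonzero vector of [F_2^2]; a 2-adic descent
   then forces [v = 0], whose cycle has length 1. *)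

Lemma iter_period_dvd T (f : T -> T) x n N : 0 < n -> iter n f x = x ->
  (forall m, 0 < m -> m < n -> iter m f x <> x) -> iter N f x = x -> n %| N.
Proof.
move=> n_gt0 fnx n_min; rewrite {1}(divn_eq N n) addnC iterD iterM (iter_fix _ fnx).
case: (posnP (N %% n)) => [N_mod0 | N_mod_gt0 fix_x]; first by rewrite /dvdn N_mod0.
by case: (n_min _ N_mod_gt0 (ltn_pmod N n_gt0) fix_x).
Qed.

(* [(a, b, c, d)] stands for the matrix [[a, b], [c, d]]. *)
Definition mx2 := (nat * nat * nat * nat)%type.

Definition mulmx2 (M N : mx2) : mx2 :=
  let: (a, b, c, d) := M in let: (a', b', c', d') := N in
  (a * a' + b * c', a * b' + b * d', c * a' + d * c', c * b' + d * d').

Definition mx2_1 : mx2 := (1, 0, 0, 1).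

Definition mxpow2 (M : mx2) n := iter n (mulmx2 M) mx2_1.

Definition mxv2 (M : mx2) (v : nat * nat) : nat * nat :=
  let: (a, b, c, d) := M in (a * v.1 + b * v.2, c * v.1 + d * v.2).

Definition vscale c (v : nat * nat) := (c * v.1, c * v.2).

Definition vmod m (v : nat * nat) := (v.1 %% m, v.2 %% m).

Lemma mulmx2A A B C : mulmx2 A (mulmx2 B C) = mulmx2 (mulmx2 A B) C.
Proof.
case: A B C => [[[a b] c] d] [[[a1 b1] c1] d1] [[[a2 b2] c2] d2] /=.
congr (_, _, _, _); ring.
Qed.

Lemma mul1mx2 A : mulmx2 mx2_1 A = A.
Proof. by case: A => [[[a b] c] d] /=; congr (_, _, _, _); ring. Qed.

Lemma mxpow2D M m n : mxpow2 M (m + n) = mulmx2 (mxpow2 M m) (mxpow2 M n).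
Proof.
elim: m => [|m IHm]; first by rewrite mul1mx2.
by rewrite addSn /mxpow2 !iterS -/(mxpow2 M _) IHm mulmx2A.
Qed.

Lemma mxv2_1 v : mxv2 mx2_1 v = v.
Proof. by case: v => x y /=; rewrite !mul1n !mul0n addn0. Qed.

Lemma mxv2M A B v : mxv2 (mulmx2 A B) v = mxv2 A (mxv2 B v).
Proof.
case: A B v => [[[a b] c] d] [[[a1 b1] c1] d1] [x y] /=.
congr (_, _); ring.
Qed.

Lemma mxv2_pow M n v : mxv2 (mxpow2 M n) v = iter n (mxv2 M) v.
Proof.
by elim: n => [|n IHn]; rewrite ?mxv2_1 // /mxpow2 iterS mxv2M -/(mxpow2 M n) IHn.
Qed.

Lemma mxv2_scale M c v : mxv2 M (vscale c v) = vscale c (mxv2 M v).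
Proof.
by case: M v => [[[a b] c'] d] [x y]; rewrite /vscale /=; congr (_, _); ring.
Qed.

Lemma vscale_inj c : 0 < c -> injective (vscale c).
Proof.
by move=> c_gt0 [x y] [x' y'] [/eqP + /eqP]; rewrite !eqn_pmul2l // => /eqP-> /eqP->.
Qed.

Lemma vmod_small m v : v.1 < m -> v.2 < m -> vmod m v = v.
Proof. by case: v => x y /= x_lt y_lt; rewrite /vmod !modn_small. Qed.

Lemma vmod_dvdm d m v : d %| m -> vmod d (vmod m v) = vmod d v.
Proof. by move=> d_dvd; rewrite /vmod /= !modn_dvdm. Qed.

Lemma vmod_scale c m v : vmod (c * m) (vscale c v) = vscale c (vmod m v).
Proof. by rewrite /vmod /vscale /= !muln_modr. Qed.

Lemma vmod_mxv2 m M v : vmod m (mxv2 M (vmod m v)) = vmod m (mxv2 M v).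
Proof.
case: M v => [[[a b] c] d] [x y]; rewrite /vmod /=.
by congr (_, _); rewrite -modnDm !modnMmr modnDm.
Qed.

Lemma iter_vmod_mxv2 m M n v : v.1 < m -> v.2 < m ->
  iter n (fun u => vmod m (mxv2 M u)) v = vmod m (mxv2 (mxpow2 M n) v).
Proof.
move=> v1_lt v2_lt; elim: n => [|n IHn]; first by rewrite mxv2_1 vmod_small.
by rewrite iterS IHn vmod_mxv2 /mxpow2 iterS mxv2M.
Qed.

Definition mx2_eq1_mod m (M : mx2) :=
  exists a b c d, M = (1 + m * a, m * b, m * c, 1 + m * d).

Lemma mx2_eq1_mod_mxv m M v : mx2_eq1_mod m M -> vmod m (mxv2 M v) = vmod m v.
Proof.
case: v => x y [a [b [c [d ->]]]]; rewrite /vmod /=; congr (_, _).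
  have -> : (1 + m * a) * x + m * b * y = (a * x + b * y) * m + x by ring.
  by rewrite modnMDl.
have -> : m * c * x + (1 + m * d) * y = (c * x + d * y) * m + y by ring.
by rewrite modnMDl.
Qed.

Lemma mx2_eq1_mod_sqr m M :
  2 %| m -> mx2_eq1_mod m M -> mx2_eq1_mod (2 * m) (mulmx2 M M).
Proof.
move=> /dvdnP[h ->] [a [b [c [d ->]]]].
exists (a + h * (a * a + b * c)), (b + h * b * (a + d)),
       (c + h * c * (a + d)), (d + h * (b * c + d * d)).
by rewrite /=; congr (_, _, _, _); ring.
Qed.

Lemma mx2_eq1_mod2 a b c d : odd a -> ~~ odd b -> ~~ odd c -> odd d ->
  mx2_eq1_mod 2 (a, b, c, d).
Proof.
move=> a_odd b_even c_even d_odd; exists a./2, b./2, c./2, d./2.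
rewrite -{1}(odd_double_half a) -{1}(odd_double_half b) -{1}(odd_double_half c).
by rewrite -{1}(odd_double_half d) a_odd (negbTE b_even) (negbTE c_even) d_odd -!mul2n.
Qed.

Definition fixpoint_free_mod2 (M : mx2) :=
  forall w, vmod 2 (mxv2 M w) = vmod 2 w -> vmod 2 w = (0, 0).

Lemma fixpoint_free_mod2_pow2 M e v : fixpoint_free_mod2 M ->
  vmod (2 ^ e) (mxv2 M v) = vmod (2 ^ e) v -> vmod (2 ^ e) v = (0, 0).
Proof.
move=> M_free; elim: e v => [|e IHe] v fix_v; first by rewrite /vmod !modn1.
have /M_free v_even : vmod 2 (mxv2 M v) = vmod 2 v.
  have two_dvd : 2 %| 2 ^ e.+1 by rewrite expnS dvdn_mulr.
  by rewrite -(vmod_dvdm _ two_dvd) fix_v vmod_dvdm.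
move: fix_v; have {v_even} -> : v = vscale 2 (v.1 %/ 2, v.2 %/ 2).
  by case: v v_even => x y [x_even y_even]; rewrite /vscale /=; congr (_, _); lia.
rewrite expnS mxv2_scale !vmod_scale => /vscale_inj fix_w.
by rewrite IHe ?fix_w.
Qed.

Definition cat_mx p q : mx2 := (1, p, q, 1 + p * q).

Lemma iter_cat_map e p q v n : in_Z2e e v ->
  iter n (cat_map e p q) v = vmod (2 ^ e) (mxv2 (mxpow2 (cat_mx p q) n) v).
Proof. by case=> v1_lt v2_lt; exact: (iter_vmod_mxv2 (cat_mx p q) n v1_lt v2_lt). Qed.

Lemma cat_pow_T1_eq1_mod2 p q : mx2_eq1_mod 2 (mxpow2 (cat_mx p q) (T1 p q)).
Proof.
rewrite /T1; case p_odd: (odd p); case q_odd: (odd q) => /=;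
  apply: mx2_eq1_mod2; do 10 rewrite ?oddD ?oddM ?p_odd ?q_odd //=.
Qed.

Lemma cat_pow_T1_eq1_mod p q k :
  mx2_eq1_mod (2 ^ k.+1) (mxpow2 (cat_mx p q) (T1 p q * 2 ^ k)).
Proof.
elim: k => [|k IHk]; first by rewrite muln1; apply: cat_pow_T1_eq1_mod2.
rewrite [2 ^ k.+1]expnS mulnCA mul2n -addnn mxpow2D expnS.
by apply: mx2_eq1_mod_sqr => //; rewrite expnS dvdn_mulr.
Qed.

Lemma iter_cat_map_T1 e p q v : 0 < e -> in_Z2e e v ->
  iter (T1 p q * 2 ^ e.-1) (cat_map e p q) v = v.
Proof.
move=> e_gt0 v_in; rewrite iter_cat_map // mx2_eq1_mod_mxv.
  by case: v_in => v1_lt v2_lt; rewrite vmod_small.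
by have := cat_pow_T1_eq1_mod p q e.-1; rewrite prednK.
Qed.

Lemma cat_pow_fixpoint_free p q n : odd p -> odd q -> ~~ (3 %| n) ->
  fixpoint_free_mod2 (mxpow2 (cat_mx p q) n).
Proof.
move=> p_odd q_odd n_not3 w; rewrite mxv2_pow (divn_eq n 3) iterD iterM.
have C3_eq1 : forall u, vmod 2 (iter 3 (mxv2 (cat_mx p q)) u) = vmod 2 u.
  have := cat_pow_T1_eq1_mod2 p q; rewrite /T1 p_odd q_odd => C3 u.
  by rewrite -mxv2_pow mx2_eq1_mod_mxv.
have vmod_iter k u : vmod 2 (iter k (iter 3 (mxv2 (cat_mx p q))) u) = vmod 2 u.
  by elim: k => [|k IHk] //; rewrite iterS C3_eq1.
rewrite vmod_iter; move: n_not3; rewrite /dvdn.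
case: w => x y; rewrite /vmod /= !modn2.
have : n %% 3 < 3 by rewrite ltn_mod.
case: (n %% 3) => [|[|[|//]]] // _ _; do 3 rewrite /= ?oddD ?oddM ?p_odd ?q_odd.
all: by case: (odd x); case: (odd y) => // [][].
Qed.

Lemma cat_fixpoint_eq0 e p q n v : odd p -> odd q -> ~~ (3 %| n) -> in_Z2e e v ->
  iter n (cat_map e p q) v = v -> v = (0, 0).
Proof.
move=> p_odd q_odd n_not3 v_in; rewrite iter_cat_map //.
have v_mod : vmod (2 ^ e) v = v by case: v_in => v1_lt v2_lt; rewrite vmod_small.
rewrite -{2}v_mod => fix_v; rewrite -v_mod.
exact: fixpoint_free_mod2_pow2 (cat_pow_fixpoint_free p_odd q_odd n_not3) fix_v.
Qed.

Lemma cycle_length_origin e p q n : cycle_length e p q (0, 0) n -> n = 1.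
Proof.
case=> n_gt0 [_ n_min]; apply/eqP; rewrite eqn_leq n_gt0 andbT leqNgt.
by apply/negP => /(n_min 1 isT); rewrite /cat_map /= !muln0 mod0n.
Qed.

Lemma cycle_length_dvd_T1 e p q v n : 0 < e -> in_Z2e e v ->
  cycle_length e p q v n -> n %| T1 p q * 2 ^ e.-1.
Proof.
move=> e_gt0 v_in [n_gt0 [fix_v n_min]].
exact: (iter_period_dvd n_gt0 fix_v n_min (iter_cat_map_T1 p q e_gt0 v_in)).
Qed.

Lemma cycle_length_eq1_or_T1_dvd e p q v n : 0 < e -> in_Z2e e v ->
  cycle_length e p q v n -> n = 1 \/ T1 p q %| n.
Proof.
move=> e_gt0 v_in cyc; have := cycle_length_dvd_T1 e_gt0 v_in cyc.
rewrite /T1; case: ifP => [/andP[p_odd q_odd] _ | _].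
  have [|n_not3] := boolP (3 %| n); [by right | left].
  case: (cyc) => _ [fix_v _]; move: cyc.
  rewrite (cat_fixpoint_eq0 p_odd q_odd n_not3 v_in fix_v).
  exact: cycle_length_origin.
case: ifP => _ n_dvd; last by right.
move: n_dvd; rewrite -expnS prednK // => /(dvdn_pfactor _ _ (isT : prime 2))[[|i] _ ->].
  by left.
by right; rewrite expnS dvdn_mulr.
Qed.

Lemma dvdn_mul_pow2 t n k : 0 < t -> t %| n -> n %| t * 2 ^ k ->
  exists2 i, i <= k & n = 2 ^ i * t.
Proof.
move=> t_gt0 /dvdnP[m ->]; rewrite mulnC dvdn_pmul2l //.
by case/(dvdn_pfactor _ _ (isT : prime 2)) => i i_le ->; exists i; rewrite // mulnC.
Qed.

Theorem mainTheorem18 (p q e : nat) (v : nat * nat) (n : nat) :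
  0 < p -> 0 < q -> 2 <= e -> in_Z2e e v -> cycle_length e p q v n ->
  n = 1 \/ exists k, k < e /\ n = 2 ^ k * T1 p q.
Proof.
move=> _ _ e_ge2 v_in cyc; have e_gt0 : 0 < e by apply: leq_trans e_ge2.
have [-> | T1_dvd] := cycle_length_eq1_or_T1_dvd e_gt0 v_in cyc; first by left.
have T1_gt0 : 0 < T1 p q by rewrite /T1; case: ifP => _; last case: ifP.
have [k k_le ->] := dvdn_mul_pow2 T1_gt0 T1_dvd (cycle_length_dvd_T1 e_gt0 v_in cyc).
by right; exists k; split; first by rewrite -ltnS prednK in k_le.
Qed.
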